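(* For every integer $m\ge3$, $6$ divides $P_m(3)$.
   Context: The Ducci function $D:\mathbb{Z}_m^3\to\mathbb{Z}_m^3$ is $D(x_1,x_2,x_3)=(x_1+x_2,\,x_2+x_3,\,x_3+x_1)$, entries mod $m$. The period $\mathrm{Per}(\mathbf{u})$ is the smallest $k\ge1$ such that $D^{l+k}(\mathbf{u})=D^l(\mathbf{u})$ for some $l\ge0$, and $P_m(3)=\mathrm{Per}(0,0,1)$. *)

From mathcomp Require Import all_boot all_order all_algebra.
Set Implicit Arguments. Unset Strict Implicit. Unset Printing Implicit Defensive.
Import GRing.Theory.
Local Open Scope ring_scope.

(* Points of Z_m^3 (meaningful for 1 < m). *)
Definition trip (m : nat) := ('Z_m * 'Z_m * 'Z_m)%type.

Definition ducci (m : nat) (u : trip m) : trip m :=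
  let: (x1, x2, x3) := u in (x1 + x2, x2 + x3, x3 + x1).

Definition eventually_periodic_with (m : nat) (u : trip m) (k : nat) : Prop :=
  exists l : nat, iter (l + k) (@ducci m) u = iter l (@ducci m) u.

Definition is_Per (m : nat) (u : trip m) (k : nat) : Prop :=
  (0 < k)%N /\ eventually_periodic_with u k /\
  (forall k' : nat, (0 < k')%N -> eventually_periodic_with u k' -> (k <= k')%N).

Definition e3 (m : nat) : trip m := (0, 0, 1).

(* The differences (x2 - x1, x3 - x2) of a Ducci iterate evolve under the
   linear map (a, b) |-> (a + b, -a), whose cube is -1.  This map is
   injective, so an eventual period k of (0,0,1) already makes the
   difference vector (0,1) periodic with period k; as 2 <> 0 in Z_m for
   m >= 3, the orbit of (0,1) consists of six distinct vectors, whence 6 | k. *)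
From mathcomp Require Import all_boot all_order all_algebra.
From mathcomp Require Import ring.
From Stdlib Require Import Classical Wf_nat.
Set Implicit Arguments. Unset Strict Implicit. Unset Printing Implicit Defensive.
Import GRing.Theory.
Local Open Scope ring_scope.

Lemma ex_least_nat (P : nat -> Prop) :
  (exists n, P n) -> exists n, P n /\ forall k, P k -> (n <= k)%N.
Proof.
move=> exP; have [n [[Pn n_least] _]] :=
  dec_inh_nat_subset_has_unique_least_element P (fun n => classic (P n)) exP.
by exists n; split=> // k /n_least /leP.
Qed.

Lemma inj_iter (T : Type) (f : T -> T) n : injective f -> injective (iter n f).
Proof. by move=> f_inj; elim: n => //= n IHn x y /f_inj /IHn. Qed.

Lemma iter_eventually_periodic (T : finType) (f : T -> T) (x : T) :
  exists2 k, (0 < k)%N & exists l, iter (l + k) f x = iter l f x.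
Proof.
have /trajectP[l lt_l_order eq_l] := looping_order f x.
by exists (order f x - l)%N; rewrite ?subn_gt0 //; exists l; rewrite subnKC // ltnW.
Qed.

Section DifferenceMap.
Variable V : zmodType.

Definition diff_map (d : V * V) : V * V := (d.1 + d.2, - d.1).

Lemma iter3_diff_map d : iter 3 diff_map d = (- d.1, - d.2).
Proof.
case: d => a b; rewrite /diff_map /= [a + b - a]addrC addKr.
by rewrite opprD addrCA subrr addr0.
Qed.

Lemma iter6_diff_map d : iter 6 diff_map d = d.
Proof. by rewrite (iterD 3 3) !iter3_diff_map /= !opprK; case: d. Qed.

Lemma iter_diff_map_mod6 k d : iter k diff_map d = iter (k %% 6) diff_map d.
Proof.
rewrite {1}(divn_eq k 6) iterD.
elim: (k %/ 6)%N => [|q IHq]; first by rewrite mul0n.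
by rewrite mulSn iterD IHq iter6_diff_map.
Qed.

Lemma diff_map_inj : injective diff_map.
Proof.
move=> [a b] [c d] [eq_sum /oppr_inj eq_ac]; rewrite eq_ac in eq_sum *.
by rewrite (addrI _ eq_sum).
Qed.

End DifferenceMap.

Arguments diff_map {V}.

Lemma diff_map_01_periodic_dvd6 (R : pzRingType) (k : nat) :
  2%:R != 0 :> R -> iter k diff_map (0, 1) = (0, 1) :> R * R -> (6 %| k)%N.
Proof.
move=> two_nz; rewrite iter_diff_map_mod6 /dvdn.
have one_nz : 1 != 0 :> R.
  by apply: contraNneq two_nz => eq10; rewrite mulr2n eq10 addr0.
have m1_neq1 : -1 != 1 :> R.
  by apply: contraNneq two_nz => eq_m11; rewrite mulr2n -{1}eq_m11 addNr.
have : (k %% 6 < 6)%N by rewrite ltn_pmod.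
case: (k %% 6)%N => [|[|[|[|[|[|r]]]]]] //= _; rewrite /diff_map /=.
all: rewrite ?(add0r, addr0, subr0, oppr0, subrr, sub0r, opprK, addKr) => -[].
all: by move=> /eqP; rewrite ?oppr_eq0 ?(negbTE one_nz) ?(negbTE m1_neq1).
Qed.

Section DucciDifferences.
Variable m : nat.

Definition ducci_diffs (x : trip m) : 'Z_m * 'Z_m :=
  let: (x1, x2, x3) := x in (x2 - x1, x3 - x2).

Lemma ducci_diffsE x : ducci_diffs (ducci x) = diff_map (ducci_diffs x).
Proof. by case: x => [[a b] c]; rewrite /diff_map /=; congr pair; ring. Qed.

Lemma ducci_diffs_iter n x :
  ducci_diffs (iter n (@ducci m) x) = iter n diff_map (ducci_diffs x).
Proof. by elim: n => //= n IHn; rewrite ducci_diffsE IHn. Qed.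

Lemma ducci_diffs_e3 : ducci_diffs (e3 m) = (0, 1).
Proof. by rewrite /= !subr0. Qed.

Lemma e3_eventual_period_dvd6 k :
  (2 < m)%N -> eventually_periodic_with (e3 m) k -> (6 %| k)%N.
Proof.
move=> m_gt2 [l /(congr1 ducci_diffs)]; rewrite !ducci_diffs_iter iterD.
move/(inj_iter (@diff_map_inj _)); rewrite ducci_diffs_e3.
apply: diff_map_01_periodic_dvd6.
by apply/eqP => /(congr1 (@nat_of_ord _)); rewrite val_Zp_nat ?modn_small // ltnW.
Qed.

End DucciDifferences.

Lemma is_Per_exists m (u : trip m) : exists k, is_Per u k.
Proof.
have [k0 k0_gt0 per_k0] := iter_eventually_periodic (@ducci m) u.
have [k [[k_gt0 per_k] k_min]] :=
  @ex_least_nat (fun k => 0 < k /\ eventually_periodic_with u k)%N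
    (ex_intro _ k0 (conj k0_gt0 per_k0)).
by exists k; split=> //; split=> // k' k'_gt0 per_k'; apply: k_min.
Qed.

Theorem theorem3p5 (m : nat) (hm : (3 <= m)%N) :
  exists k : nat, is_Per (e3 m) k /\ (6 %| k)%N.
Proof.
have [k Per_k] := is_Per_exists (e3 m).
exists k; split=> //.
by case: Per_k => _ [per_k _]; apply: e3_eventual_period_dvd6 per_k.
Qed.
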